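(* Let $k\ge1$ and let $\Gamma\subset\mathbb{R}_+^k$ be a nonempty compact set of possible allocations. For every random valuation $X$ with values in $\mathbb{R}_+^k$ and finite expectation ($\mathbb{E}\|X\|<\infty$) there exists a monotonic (incentive compatible and individually rational) $\Gamma$-mechanism $\mu$ with $R(\mu;X)=\textsc{MonRev}_\Gamma(X)$.
   Context: A $\Gamma$-mechanism $\mu=(q,s)$ consists of $q:\mathbb{R}_+^k\to\Gamma$ and $s:\mathbb{R}_+^k\to\mathbb{R}$; it is IC if $q(x)\cdot x-s(x)\ge q(y)\cdot x-s(y)$ for all $x,y\in\mathbb{R}_+^k$, and IR if $q(x)\cdot x-s(x)\ge0$ for all $x\in\mathbb{R}_+^k$. It is monotonic if $s(y)\ge s(x)$ whenever $y\ge x$ (coordinatewise) in $\mathbb{R}_+^k$. The revenue is $R(\mu;X):=\mathbb{E}[s(X)]$, and $\textsc{MonRev}_\Gamma(X)$ is the supremum of $R(\mu;X)$ over all monotonic IC and IR $\Gamma$-mechanisms $\mu$. *)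

From HB Require Import structures.
From mathcomp Require Import all_boot all_order all_algebra.
From mathcomp Require Import all_classical all_reals all_analysis.
Set Implicit Arguments. Unset Strict Implicit. Unset Printing Implicit Defensive.
Import Order.TTheory GRing.Theory Num.Theory.
Import numFieldTopology.Exports numFieldNormedType.Exports.
Local Open Scope classical_set_scope.
Local Open Scope ring_scope.

Definition nonneg_vec (R : realType) (k : nat) (x : 'rV[R]_k) : Prop :=
  forall i : 'I_k, 0 <= x 0 i.

Definition vec_le (R : realType) (k : nat) (x y : 'rV[R]_k) : Prop :=
  forall i : 'I_k, x 0 i <= y 0 i.

Definition dotv (R : realType) (k : nat) (x y : 'rV[R]_k) : R :=
  \sum_(i < k) x 0 i * y 0 i.

Definition rvec (d : measure_display) (T : measurableType d) (R : realType)
  (k : nat) (X : 'I_k -> T -> R) (w : T) : 'rV[R]_k := \row_i X i w.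

Definition maps_into_Gamma (R : realType) (k : nat) (Gamma : set 'rV[R]_k)
  (q : 'rV[R]_k -> 'rV[R]_k) : Prop :=
  forall x, nonneg_vec x -> Gamma (q x).

Definition IC (R : realType) (k : nat) (q : 'rV[R]_k -> 'rV[R]_k)
  (s : 'rV[R]_k -> R) : Prop :=
  forall x y, nonneg_vec x -> nonneg_vec y ->
    dotv (q y) x - s y <= dotv (q x) x - s x.

Definition IR (R : realType) (k : nat) (q : 'rV[R]_k -> 'rV[R]_k)
  (s : 'rV[R]_k -> R) : Prop :=
  forall x, nonneg_vec x -> 0 <= dotv (q x) x - s x.

Definition monotonic (R : realType) (k : nat) (s : 'rV[R]_k -> R) : Prop :=
  forall x y, nonneg_vec x -> nonneg_vec y -> vec_le x y -> s x <= s y.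

Definition revenue (d : measure_display) (T : measurableType d) (R : realType)
  (P : probability T R) (k : nat) (X : 'I_k -> T -> R)
  (s : 'rV[R]_k -> R) : \bar R :=
  (\int[P]_w (s (rvec X w))%:E)%E.

(* admissible: a monotonic IC and IR Gamma-mechanism (q,s) for which s(X)
   is a random variable, so that E[s(X)] makes sense *)
Definition admissible_mech (d : measure_display) (T : measurableType d)
  (R : realType) (k : nat) (Gamma : set 'rV[R]_k) (X : 'I_k -> T -> R)
  (q : 'rV[R]_k -> 'rV[R]_k) (s : 'rV[R]_k -> R) : Prop :=
  [/\ maps_into_Gamma Gamma q, IC q s, IR q s, monotonic s &
      measurable_fun setT (fun w => s (rvec X w))].

Definition MonRev (d : measure_display) (T : measurableType d) (R : realType)
  (P : probability T R) (k : nat) (Gamma : set 'rV[R]_k)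
  (X : 'I_k -> T -> R) : \bar R :=
  ereal_sup [set revenue P X s | s in
     [set s | exists q, admissible_mech Gamma X q s]].

From HB Require Import structures.
From mathcomp Require Import all_boot all_order all_algebra.
From mathcomp Require Import all_classical all_reals all_analysis.
From mathcomp Require Import measurable_realfun.
From mathcomp Require Import ring lra.
Set Implicit Arguments.
Unset Strict Implicit.
Unset Printing Implicit Defensive.
Import Order.TTheory GRing.Theory Num.Theory.
Import numFieldTopology.Exports numFieldNormedType.Exports.
Local Open Scope classical_set_scope.
Local Open Scope ring_scope.

(* Take a revenue-maximising sequence of monotonic mechanisms (q_n, s_n),
   normalised so that s_n(0) = 0, and let M bound the entries of Gamma.  The
   buyer utilities b_n(x) = q_n(x).x - s_n(x) lie in [0, M sum x] and are
   M-Lipschitz for the l1 distance, so a diagonal argument over the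
   nonnegative rational points yields a subsequence along which they converge
   pointwise to some b.  Let s be the limit superior of the payments along that
   subsequence: it is monotonic and measurable, and since the payments are
   dominated by the integrable M sum X, the reverse Fatou lemma shows that its
   revenue is at least MonRev.  For each x, a cluster point c in Gamma of the
   allocations q_n(x), taken along indices where s_n(x) tends to s(x),
   satisfies c.x = s(x) + b(x) and c.(y - x) <= b(y) - b(x); choosing
   q(x) := c makes (q, s) incentive compatible and individually rational. *)

Section vectors.
Variables (R : realType) (k : nat).
Implicit Types (g x y : 'rV[R]_k).

Definition sumv x := \sum_(i < k) x 0 i.
Definition dist_l1 x y := \sum_(i < k) `|x 0 i - y 0 i|.

Lemma nonneg_vec0 : nonneg_vec (0 : 'rV[R]_k).
Proof. by move=> i; rewrite mxE. Qed.

Lemma vec_le0 x : nonneg_vec x -> vec_le 0 x.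
Proof. by move=> x0 i; rewrite mxE. Qed.

Lemma dotv0 g : dotv g 0 = 0.
Proof. by rewrite /dotv big1 // => i _; rewrite mxE mulr0. Qed.

Lemma sumv_ge0 x : nonneg_vec x -> 0 <= sumv x.
Proof. by move=> x0; apply: sumr_ge0. Qed.

Lemma dotv_ge0 g x : nonneg_vec g -> nonneg_vec x -> 0 <= dotv g x.
Proof. by move=> g0 x0; apply: sumr_ge0 => i _; apply: mulr_ge0. Qed.

Lemma dotv_le_sumv g x M : nonneg_vec g -> (forall i, g 0 i <= M) ->
  nonneg_vec x -> dotv g x <= M * sumv x.
Proof.
move=> g0 gM x0; rewrite /sumv mulr_sumr; apply: ler_sum => i _.
exact: ler_wpM2r.
Qed.

Lemma dotv_lipschitz g x y M : nonneg_vec g -> (forall i, g 0 i <= M) ->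
  dotv g x - dotv g y <= M * dist_l1 x y.
Proof.
move=> g0 gM; rewrite /dotv /dist_l1 -sumrB mulr_sumr; apply: ler_sum => i _.
rewrite -mulrBr (le_trans (ler_norm _)) // normrM ger0_norm //.
exact: ler_wpM2r.
Qed.

Lemma dist_l1C x y : dist_l1 x y = dist_l1 y x.
Proof. by apply: eq_bigr => i _; rewrite distrC. Qed.

Lemma entry_le_norm g i : `|g 0 i| <= `|g|.
Proof.
rewrite [X in _ <= X]mx_normrE.
exact: (le_bigmax _ (fun ij : 'I_1 * 'I_k => `|g ij.1 ij.2|) (0, i)).
Qed.

Lemma compact_entries_bounded (G : set 'rV[R]_k) : compact G ->
  exists2 M, 0 <= M & forall g, G g -> forall i, `|g 0 i| <= M.
Proof.
move=> /compact_bounded [M [Mreal GM]].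
exists (`|M| + 1) => [|g Gg i]; first by rewrite addr_ge0.
apply: le_trans (entry_le_norm g i) _; apply: GM Gg.
by rewrite (le_lt_trans (real_ler_norm Mreal)) // ltrDl.
Qed.

Lemma continuous_dotv y : continuous (fun c : 'rV[R]_k => dotv c y).
Proof.
have -> : (fun c : 'rV[R]_k => dotv c y) =
    \sum_(i < k) (fun c : 'rV[R]_k => c 0 i * y 0 i).
  by apply/funext => c; rewrite fct_sumE.
apply: (big_ind (fun f : 'rV[R]_k -> R => continuous f)).
- exact: cst_continuous.
- by move=> f g cf cg c; exact: (continuousD (cf c) (cg c)).
- move=> i _ c; apply: continuousM; first exact: coord_continuous.
  exact: cst_continuous.
Qed.

End vectors.

Lemma cvgn_later_terms {T : topologicalType} (u v : nat -> T) (l : T) :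
  u @ \oo --> l ->
  (\forall n \near \oo, exists2 m, (n <= m)%N & v n = u m) -> v @ \oo --> l.
Proof.
move=> ul [N _ vu] A /ul [M _ uA]; exists (maxn N M) => // n.
rewrite /= geq_max => /andP[Nn Mn]; have [m nm ->] := vu n Nn.
exact/uA/(leq_trans Mn).
Qed.

Lemma cvgn_subseq {T : topologicalType} (u : nat -> T) (phi : nat -> nat)
    (l : T) :
  (forall n, (n <= phi n)%N) -> u @ \oo --> l -> (u \o phi) @ \oo --> l.
Proof.
by move=> phi_ge ul; apply: cvgn_later_terms ul _; near=> n; exists (phi n).
Unshelve. all: by end_near. Qed.

Lemma le_cluster_lim {I : Type} {T : topologicalType} {R : realType}
    (F : set_system I) {FF : Filter F} (v : I -> T) (w : I -> R)
    (h : T -> R) (a : R) (c : T) :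
  {for c, continuous h} -> cluster (v @ F) c -> w @ F --> a ->
  (forall i, h (v i) <= w i) -> h c <= a.
Proof.
move=> hc vc wa hw; rewrite leNgt; apply/negP => ahc.
pose e := (h c - a) / 2.
have e0 : 0 < e by rewrite divr_gt0 // subr_gt0.
have Fw : F [set i | w i < a + e].
  move/cvgrPdist_lt : wa => /(_ e e0); apply: filterS => i /=.
  by rewrite ltr_distlC => /andP[].
have nc : nbhs c [set c' | h c - e < h c'].
  move/cvgrPdist_lt : hc => /(_ e e0); apply: filterS => c' /=.
  by rewrite ltr_distlC => /andP[].
have Fv : F (v @^-1` (v @` [set i | w i < a + e])).
  by apply: filterS Fw => i wi; exists i.
have [_ [[i wi <-] hvi]] := vc _ _ Fv nc.
move: wi hvi (hw i); rewrite /= /e; lra.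
Qed.

Lemma increasing_seq_ge (phi : nat -> nat) : increasing_seq phi ->
  forall n, (n <= phi n)%N.
Proof.
move=> /increasing_seqP phiS; elim=> // n IHn.
exact: leq_ltn_trans IHn (phiS n).
Qed.

Section diagonal_extraction.
Variables (R : realType) (f : nat -> nat -> R).
Hypothesis f_bounded : forall j, exists B, forall n, `|f n j| <= B.

Let bounded_column (g : nat -> nat) j : bounded_fun (fun n => f (g n) j).
Proof.
have [B fB] := f_bounded j; exists B; split.
  by rewrite (@ger0_real _ B) // (le_trans _ (fB 0%N)).
by move=> y yB n _; apply: le_trans (fB _) (ltW yB).
Qed.

Let refine (g : nat -> nat) j : nat -> nat :=
  projT1 (cid2 (bolzano_weierstrass (bounded_column g j))).

Let refine_ge g j n : (n <= refine g j n)%N.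
Proof. by apply: increasing_seq_ge; rewrite /refine; case: cid2. Qed.

Let refine_cvg g j : cvgn (fun n => f (g (refine g j n)) j).
Proof. by rewrite /refine; case: cid2. Qed.

(* Along [nested j], the columns [0], ..., [j - 1] of [f] converge. *)
Fixpoint nested j : nat -> nat :=
  if j is j'.+1 then nested j' \o refine (nested j') j' else id.

Let nested_shift j m :
  exists2 r : nat -> nat, (forall n, (n <= r n)%N) &
    forall n, nested (j + m) n = nested j (r n).
Proof.
elim: m => [|m [r r_ge nestedE]]; first by exists id => // n; rewrite addn0.
exists (r \o refine (nested (j + m)) (j + m)) => [n|n].
  exact: leq_trans (refine_ge _ _ n) (r_ge _).
by rewrite addnS /= nestedE.
Qed.

Lemma diagonal_extraction : exists phi : nat -> nat,
  (forall n, (n <= phi n)%N) /\ forall j, cvgn (fun n => f (phi n) j).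
Proof.
exists (fun n => nested n n); split=> [n|j].
  by have [r r_ge nestedE] := nested_shift 0 n; rewrite nestedE r_ge.
have /cvg_ex [l fl] := @refine_cvg (nested j) j.
apply/cvg_ex; exists l; apply: cvgn_later_terms fl _; exists j.+1 => // n jn.
have [r r_ge nestedE] := nested_shift j.+1 (n - j.+1).
by exists (r n) => //; rewrite -[in nested n](subnKC jn) nestedE.
Qed.

End diagonal_extraction.

Section pointwise_selection.
Variables (R : realType) (k : nat).

Definition rat_point (n : nat) : 'rV[R]_k :=
  if @unpickle 'rV[rat]_k n is Some r then \row_i ratr `|r 0 i| else 0.

Lemma rat_point_nonneg n : nonneg_vec (rat_point n).
Proof.
by rewrite /rat_point; case: unpickle => [r|] i; rewrite mxE // ratr_norm.
Qed.

Lemma rat_point_dense (x : 'rV[R]_k) (e : R) : nonneg_vec x -> 0 < e ->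
  exists n, dist_l1 x (rat_point n) <= e.
Proof.
move=> x0 e0; pose e' := e / k.+1%:R.
have e'0 : 0 < e' by rewrite divr_gt0.
have /choice [r rx] : forall i : 'I_k, exists r : rat,
    ratr r \in `](x 0 i), (x 0 i + e')[.
  by move=> i; apply: rat_in_itvoo; rewrite ltrDl.
exists (pickle (\row_i r i : 'rV[rat]_k)).
apply: (@le_trans _ _ (\sum_(i < k) e')).
  apply: ler_sum => i _; rewrite /rat_point pickleK !mxE ratr_norm.
  move: (rx i); rewrite in_itv /= => /andP[xr rx'].
  have r0 : 0 <= ratr (r i) :> R by rewrite (le_trans (x0 i)) ?ltW.
  by rewrite (ger0_norm r0) distrC ger0_norm ?subr_ge0 ?ltW //; lra.
rewrite sumr_const card_ord /e' -(mulr_natr (e / _) k) -mulrA ger_pMr //.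
by rewrite mulrC ler_pdivrMr ?ltr0n // mul1r ler_nat.
Qed.

Lemma cvgn_lipschitz_of_dense (f : nat -> 'rV[R]_k -> R) (M : R) :
  0 <= M ->
  (forall n x y, nonneg_vec x -> nonneg_vec y ->
    `|f n x - f n y| <= M * dist_l1 x y) ->
  (forall j, cvgn (fun n => f n (rat_point j))) ->
  forall x, nonneg_vec x -> cvgn (fun n => f n x).
Proof.
move=> M0 f_lip f_cvg x x0; apply/cauchy_cvgP/cauchy_exP => e e0.
pose e3 := e / 3; have e30 : 0 < e3 by rewrite divr_gt0.
have [j xj] := rat_point_dense x0 (divr_gt0 e30 (ltr_wpDl M0 ltr01)).
have Mxj : M * dist_l1 x (rat_point j) <= e3.
  rewrite (le_trans (ler_wpM2l M0 xj)) // mulrCA ger_pMr //.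
  by rewrite ler_pdivrMr ?mul1r ?lerDl // ltr_wpDl.
exists (limn (fun n => f n (rat_point j))).
move/cvgrPdist_lt : (f_cvg j) => /(_ e3 e30) [N _ fjN].
exists N => // n /= Nn; rewrite -ball_normE /=.
have := f_lip n _ _ (rat_point_nonneg j) x0; rewrite dist_l1C => fjx.
have := fjN n Nn; rewrite /e3 in Mxj * => fj.
apply: le_lt_trans (ler_distD (f n (rat_point j)) _ _) _; lra.
Qed.

Lemma lipschitz_pointwise_subseq (f : nat -> 'rV[R]_k -> R) (M : R) :
  0 <= M ->
  (forall x, nonneg_vec x -> exists B, forall n, `|f n x| <= B) ->
  (forall n x y, nonneg_vec x -> nonneg_vec y ->
    `|f n x - f n y| <= M * dist_l1 x y) ->
  exists phi : nat -> nat, (forall n, (n <= phi n)%N) /\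
    forall x, nonneg_vec x -> cvgn (fun n => f (phi n) x).
Proof.
move=> M0 f_bnd f_lip.
have [|phi [phi_ge f_cvg]] :=
    @diagonal_extraction R (fun n j => f n (rat_point j)).
  by move=> j; apply: f_bnd; exact: rat_point_nonneg.
exists phi; split=> //.
by apply: (cvgn_lipschitz_of_dense M0) => // n; apply: f_lip.
Qed.

End pointwise_selection.

Section bounded_limsup.
Variables (R : realType) (u : nat -> R) (B : R).
Hypotheses (u_ge0 : forall n, 0 <= u n) (u_le : forall n, u n <= B).
Local Notation L := (limn_esup (fun n => (u n)%:E)).

Let le_esups n : (L <= esups (fun n => (u n)%:E) n)%E.
Proof.
rewrite limn_esup_lim; apply: lime_le; first exact: is_cvg_esups.
by exists n => // m /= nm; exact: nonincreasing_esups.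
Qed.

Lemma limn_esup_bounded_ge0 : (0 <= L)%E.
Proof.
rewrite limn_esup_lim; apply: lime_ge; first exact: is_cvg_esups.
apply: nearW => n; apply: (@le_trans _ _ (u n)%:E); first by rewrite lee_fin.
by apply: ereal_sup_ubound; exists n => /=.
Qed.

Lemma limn_esup_bounded_le : (L <= B%:E)%E.
Proof.
apply: le_trans (le_esups 0) _.
by apply: ge_ereal_sup => _ [m _ <-]; rewrite lee_fin.
Qed.

Lemma limn_esup_bounded_fin_num : L \is a fin_num.
Proof.
rewrite ge0_fin_numE ?limn_esup_bounded_ge0 //.
exact: le_lt_trans limn_esup_bounded_le (ltry _).
Qed.

Let limn_esup_frequently N (e : R) : 0 < e ->
  exists2 n, (N <= n)%N & fine L - e < u n.
Proof.
move=> e0; have : ((fine L - e)%:E < esups (fun n => (u n)%:E) N)%E.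
  apply: lt_le_trans (le_esups N).
  rewrite -[X in (_ < X)%E](fineK limn_esup_bounded_fin_num) lte_fin.
  by rewrite gtrDl oppr_lt0.
by move=> /ereal_sup_gt [_ [m /= Nm <-]]; rewrite lte_fin; exists m.
Qed.

Let limn_esup_eventually (e : R) : 0 < e ->
  \forall n \near \oo, u n < fine L + e.
Proof.
move=> e0; have : (ereal_inf (range (esups (fun n => (u n)%:E))) <
    (fine L + e)%:E)%E.
  have <- : L = ereal_inf (range (esups (fun n => (u n)%:E))).
    by rewrite limn_esup_lim; apply: cvg_lim => //; exact: cvg_esups_inf.
  by rewrite -[X in (X < _)%E](fineK limn_esup_bounded_fin_num) lte_fin ltrDl.
move=> /ereal_inf_lt [_ [N _ <-]] uN; exists N => // n /= Nn.
rewrite -lte_fin; apply: le_lt_trans uN.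
apply: le_trans (nonincreasing_esups _ Nn).
by apply: ereal_sup_ubound; exists n => /=.
Qed.

Lemma limn_esup_subseq : exists psi : nat -> nat,
  (forall n, (n <= psi n)%N) /\ (u \o psi) @ \oo --> fine L.
Proof.
have /choice [psi psiP] : forall j, exists n,
    (j <= n)%N /\ fine L - j.+1%:R^-1 < u n.
  move=> j; have [|n jn un] := @limn_esup_frequently j j.+1%:R^-1.
    by rewrite invr_gt0.
  by exists n.
exists psi; split=> [j|]; first by have [] := psiP j.
apply/cvgrPdist_lt => e e0; have [N _ uN] := limn_esup_eventually e0.
have je := near_infty_natSinv_lt (PosNum e0).
near=> j; have [jpsi upsi] := psiP j.
have Nj : (N <= j)%N by near: j; exact: nbhs_infty_ge.
have := uN (psi j) (leq_trans Nj jpsi).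
have je' : j.+1%:R^-1 < e by near: j.
rewrite ltr_distlC /= => uj; rewrite uj andbT (lt_trans _ upsi) //.
by rewrite ltrD2l ltrN2.
Unshelve. all: by end_near. Qed.

End bounded_limsup.

Lemma le_limn_esup (R : realType) (u v : nat -> \bar R) :
  (forall n, (u n <= v n)%E) -> (limn_esup u <= limn_esup v)%E.
Proof.
move=> uv; rewrite !limn_esup_lim; apply: lee_lim; [exact: is_cvg_esups..|].
apply: nearW => n; apply: ge_ereal_sup => _ [m /= nm <-].
by apply: le_trans (uv m) _; apply: ereal_sup_ubound; exists m.
Qed.

Lemma limn_einf_EFinB (R : realType) (a : R) (u : nat -> \bar R) :
  limn_einf (fun n => a%:E - u n)%E = (a%:E - limn_esup u)%E.
Proof.
have -> : (fun n => a%:E - u n)%E = (fun n => a%:E + (-%E \o u) n)%E by [].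
by rewrite limn_einf_shift // limn_einfN.
Qed.

Section reverse_fatou.
Local Open Scope ereal_scope.
Context d (T : measurableType d) (R : realType).
Variables (mu : {measure set T -> \bar R}) (D : set T) (mD : measurable D).
Variables (f : (T -> R)^nat) (g : T -> R).
Hypotheses (mf : forall n, measurable_fun D (f n))
  (ig : mu.-integrable D (EFin \o g))
  (fg : forall n x, D x -> (0 <= f n x <= g x)%R).

Let F x := limn_esup (fun n => (f n x)%:E).

Let F_ge0 x : D x -> 0 <= F x.
Proof.
by move=> Dx; apply: limn_esup_bounded_ge0 => n; have /andP[] := fg n Dx.
Qed.

Let F_le x : D x -> F x <= (g x)%:E.
Proof.
by move=> Dx; apply: limn_esup_bounded_le => n; have /andP[] := fg n Dx.
Qed.

Let ifn n : mu.-integrable D (EFin \o f n).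
Proof.
apply: (le_integrable mD _ _ ig) => [|x Dx]; first exact/measurable_EFinP.
have /andP[f0 fle] := fg n Dx.
by rewrite /= lee_fin !ger0_norm // (le_trans f0).
Qed.

Let iF : mu.-integrable D F.
Proof.
apply: (le_integrable mD _ _ ig) => [|x Dx].
  by apply: measurable_fun_limn_esup => n; exact/measurable_EFinP.
rewrite /= gee0_abs ?F_ge0 //; apply: le_trans (F_le Dx) _.
by rewrite lee_fin ler_norm.
Qed.

Lemma reverse_fatou :
  limn_esup (fun n => \int[mu]_(x in D) (f n x)%:E) <=
  \int[mu]_(x in D) limn_esup (fun n => (f n x)%:E).
Proof.
have gfin := integrable_fin_num mD ig.
have mgf n : measurable_fun D (fun x => (g x)%:E - (f n x)%:E).
  apply: emeasurable_funB; first by case/integrableP: ig.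
  exact/measurable_EFinP.
have gf0 n x : D x -> 0 <= (g x)%:E - (f n x)%:E.
  by move=> Dx; rewrite -EFinB lee_fin subr_ge0; have /andP[] := fg n Dx.
have := fatou mu mD mgf gf0.
under eq_integral do rewrite limn_einf_EFinB.
rewrite (integralB mD ig iF).
have -> : (fun n => \int[mu]_(x in D) ((g x)%:E - (f n x)%:E)) =
    (fun n => \int[mu]_(x in D) (g x)%:E - \int[mu]_(x in D) (f n x)%:E).
  by apply/funext => n; exact: integralB_EFin mD ig (ifn n).
by rewrite -(fineK gfin) limn_einf_EFinB leeD2lE // leeN2.
Qed.

End reverse_fatou.

Section mechanisms.
Variables (R : realType) (k : nat) (Gamma : set 'rV[R]_k) (M : R).
Hypotheses (Gamma_nonneg : forall g, Gamma g -> nonneg_vec g)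
  (Gamma_le : forall g, Gamma g -> forall i, g 0 i <= M).
Implicit Types (q : 'rV[R]_k -> 'rV[R]_k) (s : 'rV[R]_k -> R).

Definition utility q s x := dotv (q x) x - s x.

Lemma IR_payment0_le0 q s : IR q s -> s 0 <= 0.
Proof. by move=> /(_ 0 (@nonneg_vec0 R k)); rewrite dotv0 sub0r oppr_ge0. Qed.

Lemma monotonic_payment0_le s x : monotonic s -> nonneg_vec x -> s 0 <= s x.
Proof.
by move=> s_mono x0; apply: s_mono (vec_le0 x0) => //; exact: nonneg_vec0.
Qed.

Lemma IR_payment_le q s x : maps_into_Gamma Gamma q -> IR q s ->
  nonneg_vec x -> s x <= M * sumv x.
Proof.
move=> qG s_IR x0; have := s_IR x x0.
have := dotv_le_sumv (Gamma_nonneg (qG x x0)) (Gamma_le (qG x x0)) x0; lra.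
Qed.

Lemma normalized_payment_bounds q s x : maps_into_Gamma Gamma q -> IR q s ->
  monotonic s -> s 0 = 0 -> nonneg_vec x -> 0 <= s x <= M * sumv x.
Proof.
move=> qG s_IR s_mono s0 x0; apply/andP; split.
  by rewrite -s0; exact: monotonic_payment0_le s_mono x0.
exact: IR_payment_le qG s_IR x0.
Qed.

Lemma normalize_payment q s : maps_into_Gamma Gamma q -> IC q s ->
  monotonic s ->
  [/\ IC q (fun x => s x - s 0), IR q (fun x => s x - s 0) &
      monotonic (fun x => s x - s 0)].
Proof.
move=> qG s_IC s_mono; split.
- by move=> x y x0 y0; have := s_IC x y x0 y0; lra.
- move=> x x0; have := s_IC x 0 x0 (@nonneg_vec0 R k).
  have : 0 <= dotv (q 0) x.
    by apply: dotv_ge0 => //; exact/Gamma_nonneg/qG/nonneg_vec0.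
  lra.
- by move=> x y x0 y0 xy; rewrite lerD2r; exact: s_mono.
Qed.

Lemma utility_ge0 q s x : IR q s -> nonneg_vec x -> 0 <= utility q s x.
Proof. by move=> s_IR; exact: s_IR. Qed.

Lemma utility_le q s x : maps_into_Gamma Gamma q -> 0 <= s x ->
  nonneg_vec x -> utility q s x <= M * sumv x.
Proof.
move=> qG s0 x0; rewrite /utility.
have := dotv_le_sumv (Gamma_nonneg (qG x x0)) (Gamma_le (qG x x0)) x0; lra.
Qed.

Lemma IC_utility q s x y : IC q s -> nonneg_vec x -> nonneg_vec y ->
  dotv (q x) y - dotv (q x) x <= utility q s y - utility q s x.
Proof. by move=> s_IC x0 y0; have := s_IC y x y0 x0; rewrite /utility; lra. Qed.

Lemma utility_lipschitz q s x y : maps_into_Gamma Gamma q -> IC q s ->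
  nonneg_vec x -> nonneg_vec y ->
  `|utility q s x - utility q s y| <= M * dist_l1 x y.
Proof.
move=> qG s_IC x0 y0.
have lip z w : nonneg_vec z -> nonneg_vec w ->
    utility q s z - utility q s w <= M * dist_l1 z w.
  move=> z0 w0; have := IC_utility s_IC z0 w0.
  have := dotv_lipschitz z w (Gamma_nonneg (qG z z0)) (Gamma_le (qG z z0)).
  lra.
have := lip x y x0 y0; have := lip y x y0 x0; rewrite dist_l1C ler_norml.
by move=> ? ?; apply/andP; split; lra.
Qed.

End mechanisms.

Section limit_mechanism.
Variables (R : realType) (k : nat) (Gamma : set 'rV[R]_k) (M : R).
Hypotheses (Gamma_compact : compact Gamma)
  (Gamma_nonneg : forall g, Gamma g -> nonneg_vec g)
  (Gamma_le : forall g, Gamma g -> forall i, g 0 i <= M).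
Variables (q : nat -> 'rV[R]_k -> 'rV[R]_k) (s : nat -> 'rV[R]_k -> R).
Variable b : 'rV[R]_k -> R.
Hypotheses (qG : forall n, maps_into_Gamma Gamma (q n))
  (s_IC : forall n, IC (q n) (s n)) (s_IR : forall n, IR (q n) (s n))
  (s_mono : forall n, monotonic (s n)) (s0 : forall n, s n 0 = 0)
  (utility_cvg : forall x, nonneg_vec x ->
     utility (q n) (s n) x @[n --> \oo] --> b x).

Definition limsup_payment x := fine (limn_esup (fun n => (s n x)%:E)).

Let s_bounds x n : nonneg_vec x -> 0 <= s n x <= M * sumv x.
Proof.
exact: (normalized_payment_bounds Gamma_nonneg Gamma_le (qG n) (s_IR n)).
Qed.

Lemma limsup_payment_fin_num x : nonneg_vec x ->
  limn_esup (fun n => (s n x)%:E) \is a fin_num.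
Proof.
by move=> x0; apply: (@limn_esup_bounded_fin_num _ _ (M * sumv x)) => n;
  have /andP[] := s_bounds n x0.
Qed.

Lemma monotonic_limsup_payment : monotonic limsup_payment.
Proof.
move=> x y x0 y0 xy; rewrite fine_le ?limsup_payment_fin_num //.
by apply: le_limn_esup => n; rewrite lee_fin; exact: s_mono.
Qed.

Lemma limit_utility_ge0 x : nonneg_vec x -> 0 <= b x.
Proof.
move=> x0; apply: (cvgr_to_ge (utility_cvg x0)).
by apply: nearW => n; exact: utility_ge0.
Qed.

(* A cluster point of the allocations [q n x], taken along indices where
   [s n x] approaches its limit superior. *)
Lemma limit_allocation x : nonneg_vec x -> exists2 c, Gamma c &
  dotv c x = limsup_payment x + b x /\
  forall y, nonneg_vec y -> dotv c y - dotv c x <= b y - b x.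
Proof.
move=> x0.
have [psi [psi_ge s_psi]] := @limn_esup_subseq _ (fun n => s n x) (M * sumv x)
  (fun n => (andP (s_bounds n x0)).1) (fun n => (andP (s_bounds n x0)).2).
have [c [Gc c_cluster]] : Gamma `&` cluster (q (psi n) x @[n --> \oo]) !=set0.
  by apply: Gamma_compact; exists 0%N => // n _; exact: qG.
have b_psi y : nonneg_vec y ->
    utility (q (psi n)) (s (psi n)) y @[n --> \oo] --> b y.
  by move=> y0; apply: (cvgn_subseq psi_ge (utility_cvg y0)).
have dotv_psi : dotv (q (psi n) x) x @[n --> \oo] --> limsup_payment x + b x.
  apply: cvg_trans (cvgD s_psi (b_psi x x0)); apply: near_eq_cvg.
  by apply: nearW => n /=; rewrite /utility addrC subrK.
exists c => //; split.
  apply/eqP; rewrite eq_le; apply/andP; split.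
    apply: (@le_cluster_lim _ _ R \oo _ _ _ (fun z => dotv z x) _ c _
      c_cluster dotv_psi) => //.
    exact: continuous_dotv.
  rewrite -lerN2.
  apply: (@le_cluster_lim _ _ R \oo _ _ _ (fun z => - dotv z x) _ c _
    c_cluster (cvgN dotv_psi)) => //.
  by apply: continuousN; exact: continuous_dotv.
move=> y y0.
apply: (@le_cluster_lim _ _ R \oo _ _ _ (fun z => dotv z y - dotv z x) _ c _
  c_cluster (cvgB (b_psi y y0) (b_psi x x0))).
  by apply: continuousB; exact: continuous_dotv.
by move=> n; exact: IC_utility.
Qed.

Lemma limit_mechanism : exists q' : 'rV[R]_k -> 'rV[R]_k,
  [/\ maps_into_Gamma Gamma q', IC q' limsup_payment,
      IR q' limsup_payment & monotonic limsup_payment].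
Proof.
have /choice [q' q'P] : forall x, exists c, nonneg_vec x -> Gamma c /\
    dotv c x = limsup_payment x + b x /\
    forall y, nonneg_vec y -> dotv c y - dotv c x <= b y - b x.
  move=> x; have [x0|xN] := pselect (nonneg_vec x); last by exists 0.
  by have [c Gc cP] := limit_allocation x0; exists c.
exists q'; split=> [x x0|x y x0 y0|x x0|]; last exact: monotonic_limsup_payment.
- by have [] := q'P x x0.
- have [_ [qx _]] := q'P x x0; have [_ [qy qy_sub]] := q'P y y0.
  have := qy_sub x x0; lra.
- have [_ [qx _]] := q'P x x0; have := limit_utility_ge0 x0; lra.
Qed.

End limit_mechanism.

Section integrability.
Context d (T : measurableType d) (R : realType) (P : probability T R) (k : nat).
Variable X : 'I_k -> T -> R.
Hypotheses (mX : forall i, measurable_fun setT (X i))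
  (iX : (\int[P]_w (`| rvec X w |)%:E < +oo)%E).

Lemma measurable_norm_rvec : measurable_fun setT (fun w => `|rvec X w|).
Proof.
have -> : (fun w => `|rvec X w|) = (fun w =>
    \big[Num.max/0]_(ij <- index_enum ('I_1 * 'I_k)%type) `|X ij.2 w|).
  apply/funext => w; rewrite [LHS]mx_normrE.
  by apply: eq_bigr => ij _; rewrite mxE.
elim: (index_enum _) => [|ij s IHs].
  by under eq_fun do rewrite big_nil; exact: measurable_cst.
under eq_fun do rewrite big_cons.
by apply: measurable_maxr => //; exact: measurableT_comp.
Qed.

Lemma measurable_sumv_rvec : measurable_fun setT (fun w => sumv (rvec X w)).
Proof.
rewrite /sumv; under eq_fun do under eq_bigr do rewrite mxE.
exact: measurable_sum.
Qed.

Lemma integrable_sumv_rvec :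
  P.-integrable setT (fun w => (sumv (rvec X w))%:E).
Proof.
have inorm : P.-integrable setT (fun w => (`|rvec X w|)%:E).
  apply/integrableP; split; first exact/measurable_EFinP/measurable_norm_rvec.
  by under eq_integral do rewrite abse_EFin normr_id.
apply: (le_integrable measurableT _ _ (integrableZl measurableT k%:R inorm)).
  exact/measurable_EFinP/measurable_sumv_rvec.
move=> w _; rewrite /= lee_fin normrM normr_id ger0_norm // /sumv.
apply: le_trans (ler_norm_sum _ _ _) _.
have -> : k%:R = \sum_(i < k) (1 : R) by rewrite sumr_const card_ord.
by rewrite mulr_suml; apply: ler_sum => i _; rewrite mul1r entry_le_norm.
Qed.

End integrability.

Section revenue.
Context d (T : measurableType d) (R : realType) (P : probability T R) (k : nat).
Variables (Gamma : set 'rV[R]_k) (X : 'I_k -> T -> R) (M : R).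
Hypotheses (mX : forall i, measurable_fun setT (X i))
  (X_nonneg : forall w, nonneg_vec (rvec X w))
  (iX : (\int[P]_w (`| rvec X w |)%:E < +oo)%E)
  (Gamma_nonneg : forall g, Gamma g -> nonneg_vec g)
  (Gamma_le : forall g, Gamma g -> forall i, g 0 i <= M) (M_ge0 : 0 <= M).

Let integrable_Msumv :
  P.-integrable setT (fun w => (M * sumv (rvec X w))%:E).
Proof.
under eq_fun do rewrite EFinM.
exact: integrableZl (integrable_sumv_rvec mX iX).
Qed.

Lemma integrable_payment q s : admissible_mech Gamma X q s ->
  P.-integrable setT (fun w => (s (rvec X w))%:E).
Proof.
case=> qG _ s_IR s_mono ms.
have := integrableD measurableT
  (finite_measure_integrable_cst P `|s 0| measurableT) integrable_Msumv.
apply: (le_integrable measurableT); first exact/measurable_EFinP.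
move=> w _; rewrite /= lee_fin.
have s0x := monotonic_payment0_le s_mono (X_nonneg w).
have sxM := IR_payment_le Gamma_nonneg Gamma_le qG s_IR (X_nonneg w).
have M_sumv := mulr_ge0 M_ge0 (sumv_ge0 (X_nonneg w)).
have s00 := IR_payment0_le0 s_IR.
rewrite [X in _ <= X]ger0_norm ?addr_ge0 // (ler0_norm s00).
by rewrite ler_norml; apply/andP; split; lra.
Qed.

Lemma revenue_le_MonRev q s : admissible_mech Gamma X q s ->
  (revenue P X s <= MonRev P Gamma X)%E.
Proof. by move=> adm; apply: ereal_sup_ubound; exists s => //; exists q. Qed.

Lemma admissible_constant g : Gamma g ->
  admissible_mech Gamma X (fun=> g) (fun=> 0).
Proof.
move=> Gg; split=> [//|x y _ _|x x0|//|]; first by rewrite !subr0.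
- by rewrite subr0; apply: dotv_ge0 => //; exact: Gamma_nonneg.
- exact: measurable_cst.
Qed.

Lemma admissible_normalize q s : admissible_mech Gamma X q s ->
  admissible_mech Gamma X q (fun x => s x - s 0).
Proof.
case=> qG s_IC _ s_mono ms.
have [IC' IR' mono'] := normalize_payment Gamma_nonneg qG s_IC s_mono.
by split=> //; apply: measurable_funB => //; exact: measurable_cst.
Qed.

Lemma revenue_le_normalize q s : admissible_mech Gamma X q s ->
  (revenue P X s <= revenue P X (fun x => (s x - s 0)%R))%E.
Proof.
move=> adm; apply: le_integral => //.
- exact: integrable_payment adm.
- exact: integrable_payment (admissible_normalize adm).
- move=> w _; rewrite lee_fin lerDl oppr_ge0.
  by case: adm => _ _ s_IR _ _; exact: IR_payment0_le0 s_IR.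
Qed.

Lemma MonRev_approx : Gamma !=set0 ->
  exists (q : nat -> 'rV[R]_k -> 'rV[R]_k) (s : nat -> 'rV[R]_k -> R),
    (forall n, admissible_mech Gamma X (q n) (s n) /\ s n 0 = 0) /\
    revenue P X (s n) @[n --> \oo] --> MonRev P Gamma X.
Proof.
move=> [g /admissible_constant adm0].
set S := [set revenue P X s |
  s in [set s | exists q, admissible_mech Gamma X q s]].
have [|r Sr r_cvg] := @ereal_sup_seq _ S.
  apply/set0P; exists (revenue P X (fun=> 0)), (fun=> 0) => //.
  by exists (fun=> g).
have /choice [s sP] : forall n, exists s,
    (exists q, admissible_mech Gamma X q s) /\ revenue P X s = r n.
  by move=> n; have [s qs rs] := Sr n; exists s.
have /choice [q qP] : forall n, exists q, admissible_mech Gamma X q (s n).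
  by move=> n; have [] := sP n.
exists q, (fun n x => s n x - s n 0); split.
  by move=> n; split; [exact: admissible_normalize|rewrite subrr].
apply: (@squeeze_cvge _ _ _ _ r _ (cst (MonRev P Gamma X))) => //; last first.
  exact: cvg_cst.
apply: nearW => n; have [_ <-] := sP n.
apply/andP; split; first exact: revenue_le_normalize (qP n).
exact: revenue_le_MonRev (admissible_normalize (qP n)).
Qed.

Lemma measurable_limsup_payment (s : nat -> 'rV[R]_k -> R) :
  (forall n, measurable_fun setT (fun w => s n (rvec X w))) ->
  measurable_fun setT (fun w => limsup_payment s (rvec X w)).
Proof.
move=> ms; apply: measurableT_comp; first exact: fine_measurable.
by apply: measurable_fun_limn_esup => n; exact/measurable_EFinP.
Qed.

Lemma admissible_limit_subseq q s : compact Gamma ->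
  (forall n, admissible_mech Gamma X (q n) (s n) /\ s n 0 = 0) ->
  exists phi : nat -> nat, (forall n, (n <= phi n)%N) /\
    exists q', admissible_mech Gamma X q' (limsup_payment (fun n => s (phi n))).
Proof.
move=> Gamma_compact adm.
have u_bnd x : nonneg_vec x ->
    exists B, forall n, `|utility (q n) (s n) x| <= B.
  move=> x0; exists (M * sumv x) => n; have [[qG _ s_IR s_mono _] s0] := adm n.
  have /andP[s_ge0 _] :=
    normalized_payment_bounds Gamma_nonneg Gamma_le qG s_IR s_mono s0 x0.
  rewrite ger0_norm ?utility_ge0 //.
  exact (utility_le Gamma_nonneg Gamma_le qG s_ge0 x0).
have u_lip n x y : nonneg_vec x -> nonneg_vec y ->
    `|utility (q n) (s n) x - utility (q n) (s n) y| <= M * dist_l1 x y.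
  have [[qG s_IC _ _ _] _] := adm n.
  exact (utility_lipschitz Gamma_nonneg Gamma_le qG s_IC).
have [phi [phi_ge u_cvg]] := lipschitz_pointwise_subseq M_ge0 u_bnd u_lip.
exists phi; split=> //; set s' := limsup_payment _.
suff [q' [q'G q'IC q'IR q'mono]] : exists q' : 'rV[R]_k -> 'rV[R]_k,
    [/\ maps_into_Gamma Gamma q', IC q' s', IR q' s' & monotonic s'].
  exists q'; split=> //.
  by apply: measurable_limsup_payment => n; have [[]] := adm (phi n).
apply: (limit_mechanism Gamma_compact Gamma_nonneg Gamma_le
  (q := fun n => q (phi n))
  (b := fun x => limn (fun n => utility (q (phi n)) (s (phi n)) x))).
1-4: by move=> n; have [[]] := adm (phi n).
- by move=> n; have [] := adm (phi n).
- by move=> x x0; exact: u_cvg.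
Qed.

Lemma le_revenue_limsup_payment q s l :
  (forall n, admissible_mech Gamma X (q n) (s n) /\ s n 0 = 0) ->
  revenue P X (s n) @[n --> \oo] --> l ->
  (l <= revenue P X (limsup_payment s))%E.
Proof.
move=> adm rl.
have s_bnd n w : 0 <= s n (rvec X w) <= M * sumv (rvec X w).
  have [[qG _ s_IR s_mono _] s0] := adm n.
  exact (normalized_payment_bounds Gamma_nonneg Gamma_le qG s_IR s_mono s0
    (X_nonneg w)).
have ms n : measurable_fun setT (fun w => s n (rvec X w)).
  by have [[]] := adm n.
have -> : revenue P X (limsup_payment s) =
    (\int[P]_w limn_esup (fun n => (s n (rvec X w))%:E))%E.
  apply: eq_integral => w _; rewrite fineK //.
  by apply: (@limn_esup_bounded_fin_num _ _ (M * sumv (rvec X w))) => n;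
    have /andP[] := s_bnd n w.
rewrite -(cvg_lim _ rl) // -is_cvg_limn_esupE; last by apply/cvg_ex; exists l.
exact (reverse_fatou measurableT ms integrable_Msumv (fun n w _ => s_bnd n w)).
Qed.

End revenue.

Unset Implicit Arguments.

Theorem theorem2 (d : measure_display) (T : measurableType d) (R : realType)
  (P : probability T R) (k : nat) (Gamma : set 'rV[R]_k)
  (X : 'I_k -> T -> R) :
  (1 <= k)%N ->
  compact Gamma -> Gamma !=set0 -> (forall g, Gamma g -> nonneg_vec g) ->
  (forall i, measurable_fun setT (X i)) ->
  (forall w, nonneg_vec (rvec X w)) ->
  (\int[P]_w (`| rvec X w |)%:E < +oo)%E ->
  exists (q : 'rV[R]_k -> 'rV[R]_k) (s : 'rV[R]_k -> R),
    admissible_mech Gamma X q s /\ revenue P X s = MonRev P Gamma X.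
Proof.
move=> _ Gamma_compact Gamma_ne Gamma_nonneg mX X_nonneg iX.
have [M M_ge0 Gamma_norm] := compact_entries_bounded Gamma_compact.
have Gamma_le g : Gamma g -> forall i, g 0 i <= M.
  by move=> Gg i; exact: le_trans (ler_norm _) (Gamma_norm g Gg i).
have [q [s [adm rev_cvg]]] := MonRev_approx (P := P) mX X_nonneg iX
  Gamma_nonneg Gamma_le M_ge0 Gamma_ne.
have [phi [phi_ge [q' adm']]] :=
  admissible_limit_subseq Gamma_nonneg Gamma_le M_ge0 Gamma_compact adm.
exists q', (limsup_payment (fun n => s (phi n))); split=> //.
apply/eqP; rewrite eq_le (revenue_le_MonRev P adm') /=.
exact (le_revenue_limsup_payment (P := P) mX X_nonneg iX Gamma_nonneg Gamma_le
  (fun n => adm (phi n)) (cvgn_subseq phi_ge rev_cvg)).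
Qed.
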